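(* Let $\mathcal{G}\subseteq\{0,1\}^{\mathcal{X}}$, $\mathcal{H}\subseteq\{-1,+1\}^{\mathcal{X}}$, and $c^*\in\mathcal{C}(\mathcal{G},\mathcal{H})$. For $c\colon\mathcal{X}\to\{-1,+1\}$ let $(c\triangle c^* )(x)=\mathbf{1}[c(x)\neq c^*(x)]$. (i) For fixed $g\in\mathcal{G}$, the class $\mathcal{F}_g=\{x\mapsto g(x)(c\triangle c^* )(x) : c\in\mathcal{C}(\mathcal{G},\mathcal{H})\}$ satisfies $\mathcal{S}_{\mathcal{X}}(\mathcal{F}_g,k)\le \mathcal{S}_g(\mathcal{H},k)$ for every $k\ge1$. (ii) The class $\mathcal{F}=\{x\mapsto g(x)(c\triangle c^* )(x) : g\in\mathcal{G},\ c\in\mathcal{C}(\mathcal{G},\mathcal{H})\}$ satisfies $\mathcal{S}_{\mathcal{X}}(\mathcal{F},k)\le \mathcal{S}_{\mathcal{X}}(\mathcal{G},k)\cdot\sup_{g\in\mathcal{G}}\mathcal{S}_g(\mathcal{H},k)$ for every $k\ge 1$.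
   Context: A group $g \in \mathcal{G}$ is identified both with a function $g\colon \mathcal{X}\to\{0,1\}$ and with the subset $\{x : g(x)=1\}\subseteq \mathcal{X}$. Given $\mathcal{G}\subseteq\{0,1\}^{\mathcal{X}}$ and $\mathcal{H}\subseteq\{-1,+1\}^{\mathcal{X}}$ on the same domain $\mathcal{X}$, the set of group-realizable concepts $\mathcal{C}(\mathcal{G},\mathcal{H})\subseteq\{-1,+1\}^{\mathcal{X}}$ is the set of all functions $c\colon\mathcal{X}\to\{-1,+1\}$ such that for each $g\in\mathcal{G}$ there exists $h\in\mathcal{H}$ with $c(x)=h(x)$ for all $x\in g$. For a class $\mathcal{F}$ of functions on a domain $\mathcal{Z}$, the $k$-th shattering coefficient is $\mathcal{S}_{\mathcal{Z}}(\mathcal{F},k)=\sup_{z_1,\dots,z_k\in\mathcal{Z}}\left|\{(f(z_1),\dots,f(z_k)) : f\in\mathcal{F}\}\right|$; $\mathcal{S}_g(\mathcal{H},k)$ denotes this quantity with domain $\mathcal{Z}=g$ (points restricted to $g$). *)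

From mathcomp Require Import all_boot all_order.
From mathcomp Require Import boolp classical_sets.
Set Implicit Arguments. Unset Strict Implicit. Unset Printing Implicit Defensive.

(* Labels {-1,+1} are encoded as bool: true = +1, false = -1.
   Groups g : X -> bool are {0,1}-valued (true = 1); g is also read as the
   subset {x | g x}. *)

Definition group_realizable (X : Type) (G : set (X -> bool)) (H : set (X -> bool))
  : set (X -> bool) :=
  fun c => forall g, G g -> exists h, H h /\ forall x, g x -> c x = h x.

Definition npat (X : Type) (Y : finType) (F : set (X -> Y)) (k : nat)
  (z : 'I_k -> X) : nat :=
  #|[set t : {ffun 'I_k -> Y} | `[< exists f, F f /\ t = [ffun i => f (z i)] >]]|.

(* k-th shattering coefficient of F on the domain Z (a predicate on X):
   sup over z_1..z_k in Z of npat. Since npat <= #|{ffun 'I_k -> Y}|, this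
   sup is a max over a bounded range of naturals (0 if no such tuple). *)
Definition shatter (X : Type) (Y : finType) (Z : X -> bool) (F : set (X -> Y))
  (k : nat) : nat :=
  \max_(n < #|{ffun 'I_k -> Y}|.+1 |
          `[< exists z : 'I_k -> X, (forall i, Z (z i)) /\ npat F z = n >]) n.

(* sup_{g in G} S_g(H,k)  (bounded by #|{ffun 'I_k -> bool}|; 0 if G empty) *)
Definition sup_group_shatter (X : Type) (G : set (X -> bool)) (H : set (X -> bool))
  (k : nat) : nat :=
  \max_(n < #|{ffun 'I_k -> bool}|.+1 |
          `[< exists g, G g /\ shatter g H k = n >]) n.

Definition symdiff (X : Type) (c cstar : X -> bool) : X -> bool :=
  fun x => c x != cstar x.

Definition F_group (X : Type) (G H : set (X -> bool)) (cstar : X -> bool)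
  (g : X -> bool) : set (X -> bool) :=
  fun f => exists c, group_realizable G H c /\ f = (fun x => g x && symdiff c cstar x).

Definition F_all (X : Type) (G H : set (X -> bool)) (cstar : X -> bool)
  : set (X -> bool) :=
  fun f => exists g c, G g /\ group_realizable G H c /\
                       f = (fun x => g x && symdiff c cstar x).

From mathcomp Require Import all_boot all_order.
From mathcomp Require Import boolp classical_sets.

Set Implicit Arguments.
Unset Strict Implicit.
Unset Printing Implicit Defensive.

(* (i) On a tuple z, the pattern of x |-> g x && (c x != c* x) is determined by the
   pattern of the hypothesis h realizing c on g, read on the tuple z' obtained by moving
   the points of z outside g to a fixed point of g (their entries are 0 anyway).
   (ii) A pattern of F splits as the pattern p of some g in G together with a pattern of
   F_g; there are at most S(G,k) choices for p and at most sup_g S_g(H,k) for the rest. *)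

Local Open Scope nat_scope.

Lemma card_bigcup_leq (I T : finType) (P : {pred I}) (F : I -> {set T}) :
  #|\bigcup_(i in P) F i| <= \sum_(i in P) #|F i|.
Proof.
apply: (big_ind2 (fun (A : {set T}) n => #|A| <= n)) => //.
- by rewrite cards0.
- by move=> A n B m hA hB; apply: leq_trans (leq_card_setU A B) (leq_add hA hB).
Qed.

Section Shattering.

Variables (X : Type) (Y : finType).
Implicit Types (F : set (X -> Y)) (Z : X -> bool).

Lemma npat_ltn_card F k (z : 'I_k -> X) : npat F z < #|{ffun 'I_k -> Y}|.+1.
Proof. by rewrite ltnS /npat max_card. Qed.

Lemma npat_le_shatter Z F k (z : 'I_k -> X) :
  (forall i, Z (z i)) -> npat F z <= shatter Z F k.
Proof.
move=> Zz; apply: (bigmax_sup (Ordinal (npat_ltn_card F z))) => //.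
by apply/asboolP; exists z.
Qed.

Lemma shatter_le Z F k m :
  (forall z : 'I_k -> X, (forall i, Z (z i)) -> npat F z <= m) ->
  shatter Z F k <= m.
Proof. by move=> h; apply/bigmax_leqP => n /asboolP [z [Zz <-]]; apply: h. Qed.

Lemma shatter_le_card Z F k : shatter Z F k <= #|{ffun 'I_k -> Y}|.
Proof. by apply: shatter_le => z _; rewrite -ltnS npat_ltn_card. Qed.

Lemma npat_le_image F F' k k' (z : 'I_k -> X) (z' : 'I_k' -> X)
    (phi : {ffun 'I_k' -> Y} -> {ffun 'I_k -> Y}) :
  (forall f, F f -> exists2 f', F' f' &
     [ffun i => f (z i)] = phi [ffun i => f' (z' i)]) ->
  npat F z <= npat F' z'.
Proof.
move=> hF; apply: leq_trans (leq_imset_card phi _).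
apply/subset_leq_card/fintype.subsetP => t; rewrite inE => /asboolP [f [Ff ->]].
have [f' F'f' ->] := hF f Ff.
by apply: imset_f; rewrite inE; apply/asboolP; exists f'.
Qed.

End Shattering.

Lemma shatter_le_sup_group_shatter (X : Type) (G H : set (X -> bool)) g k :
  G g -> shatter g H k <= sup_group_shatter G H k.
Proof.
move=> Gg; have shatter_ltn := leq_ltn_trans (shatter_le_card g H k) (ltnSn _).
apply: (bigmax_sup (Ordinal shatter_ltn)) => //.
by apply/asboolP; exists g.
Qed.

Section GroupRealizable.

Variables (X : Type) (G H : set (X -> bool)) (cstar : X -> bool).
Hypothesis realizable_cstar : group_realizable G H cstar.
Hypothesis nonempty_groups : forall g, G g -> exists x, g x.

Lemma npat_F_group_le g k (z : 'I_k -> X) :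
  G g -> npat (F_group G H cstar g) z <= shatter g H k.
Proof.
move=> Gg; have [x0 gx0] := nonempty_groups Gg.
have [hs [_ hs_cstar]] := realizable_cstar Gg.
pose z' i := if g (z i) then z i else x0.
have gz' i : g (z' i) by rewrite /z'; case: ifP.
apply: leq_trans (npat_le_shatter H gz').
apply: (npat_le_image (phi := fun q => [ffun i => g (z i) && (q i != hs (z' i))])).
move=> _ [c [realizable_c ->]]; have [h [Hh h_c]] := realizable_c g Gg.
exists h => //; apply/ffunP => i; rewrite !ffunE /symdiff /z'.
by case: ifP => //= gzi; rewrite h_c // hs_cstar.
Qed.

Lemma shatter_F_group_le g k :
  G g -> shatter (fun _ => true) (F_group G H cstar g) k <= shatter g H k.
Proof. by move=> Gg; apply: shatter_le => z _; apply: npat_F_group_le. Qed.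

Lemma npat_F_all_le k (z : 'I_k -> X) :
  npat (F_all G H cstar) z <= npat G z * sup_group_shatter G H k.
Proof.
pose patG := [set p : {ffun 'I_k -> bool} |
  `[< exists g, G g /\ p = [ffun i => g (z i)] >]].
pose patF p := [set t : {ffun 'I_k -> bool} | `[< exists c,
  group_realizable G H c /\ t = [ffun i => p i && symdiff c cstar (z i)] >]].
have patF_all_sub : [set t : {ffun 'I_k -> bool} |
    `[< exists f, F_all G H cstar f /\ t = [ffun i => f (z i)] >]]
    \subset \bigcup_(p in patG) patF p.
  apply/fintype.subsetP => t; rewrite inE => /asboolP [_ [[g [c [Gg [hc ->]]]] ->]].
  apply/bigcupP; exists [ffun i => g (z i)].
    by rewrite inE; apply/asboolP; exists g.
  by rewrite inE; apply/asboolP; exists c; split=> //; apply/ffunP => i; rewrite !ffunE.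
have card_patF p : p \in patG -> #|patF p| <= sup_group_shatter G H k.
  rewrite inE => /asboolP [g [Gg ->]].
  apply: leq_trans (shatter_le_sup_group_shatter H k Gg).
  apply: leq_trans (npat_F_group_le z Gg).
  apply/subset_leq_card/fintype.subsetP => t; rewrite !inE => -[c [hc ->]].
  exists (fun x => g x && symdiff c cstar x); split; first by exists c.
  by apply/ffunP => i; rewrite !ffunE.
apply: leq_trans (subset_leq_card patF_all_sub) _.
apply: leq_trans; first exact: card_bigcup_leq.
apply: (@leq_trans (\sum_(p in patG) sup_group_shatter G H k)).
  exact: leq_sum.
by rewrite sum_nat_const.
Qed.

End GroupRealizable.

Theorem mainTheorem4 (X : Type) (G H : set (X -> bool)) (cstar : X -> bool) :
  group_realizable G H cstar ->
  (forall g, G g -> exists x, g x) ->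
  (forall g, G g -> forall k, (0 < k)%N ->
     (shatter (fun _ => true) (F_group G H cstar g) k <= shatter g H k)%N)
  /\
  (forall k, (0 < k)%N ->
     (shatter (fun _ => true) (F_all G H cstar) k <=
      shatter (fun _ => true) G k * sup_group_shatter G H k)%N).
Proof.
move=> realizable_cstar nonempty_groups; split.
  by move=> g Gg k _; apply: shatter_F_group_le.
move=> k _; apply: shatter_le => z _.
apply: leq_trans (npat_F_all_le realizable_cstar nonempty_groups z) _.
by rewrite leq_mul2r npat_le_shatter ?orbT.
Qed.
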